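(* Let $m,n\ge 0$ be integers with $p=2m+n\ge 2$, and let $\Delta\ge 0$. Let $\mathcal{G}_\Delta$ be the family of simple graphs with maximum degree at most $\Delta$. Then $$\omega_{r(m,n)}(\mathcal{G}_\Delta)\le \left\lfloor \frac{p-1}{p}\Delta^2\right\rfloor+\Delta+1.$$ Equivalently: for every $(m,n)$-colored mixed graph $G$ whose underlying graph has maximum degree at most $\Delta$, every relative $(m,n)$-clique of $G$ has at most $\lfloor \frac{p-1}{p}\Delta^2\rfloor+\Delta+1$ vertices.
   Context: An $(m,n)$-colored mixed graph $G$ is obtained from a simple graph $U(G)$ (its underlying graph) by giving each edge either an orientation and one of $m$ arc colors $\{1,\dots,m\}$ (making it an arc) or leaving it unoriented with one of $n$ edge colors $\{1,\dots,n\}$. For adjacent $u,v$, the adjacency type of $uv$ is: ''arc from $u$ to $v$ of color $i$'', ''arc from $v$ to $u$ of color $i$'', or ''edge of color $j$''. Two pairs $uv$, $wx$ have the same adjacency type if both are arcs $u\to v$, $w\to x$ of the same color, or both arcs $v\to u$, $x\to w$ of the same color, or both edges of the same color. A colored homomorphism $f:G\to H$ between $(m,n)$-colored mixed graphs (both with simple underlying graphs) is a vertex map such that for every adjacent pair $uv$ of $G$, $f(u)f(v)$ is adjacent in $H$ with the same adjacency type as $uv$. A set $R\subseteq V(G)$ is a relative $(m,n)$-clique if for every pair of distinct $u,v\in R$ and every colored homomorphism $f:G\to H$, $f(u)\ne f(v)$. $\omega_{r(m,n)}(G)$ is the maximum size of a relative $(m,n)$-clique of $G$; for a simple graph $\Gamma$,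 $\omega_{r(m,n)}(\Gamma)$ is the maximum of $\omega_{r(m,n)}(G)$ over all $(m,n)$-colored mixed graphs $G$ with $U(G)=\Gamma$; for a family $\mathcal{F}$, $\omega_{r(m,n)}(\mathcal{F})=\max_{\Gamma\in\mathcal{F}}\omega_{r(m,n)}(\Gamma)$. A 2-path $uvw$ in $U(G)$ is special if $uv$ and $vw$ do not have the same adjacency type (comparing $uv$ with $vw$, i.e. reading both in the direction $u\to v$, $v\to w$). It is known that two distinct vertices lie together in some relative clique (equivalently, cannot be identified by any colored homomorphism) iff they are adjacent or joined by a special 2-path. *)

From mathcomp Require Import all_boot.
Set Implicit Arguments. Unset Strict Implicit. Unset Printing Implicit Defensive.

(* Adjacency types of an (m,n)-colored mixed graph, read in the direction u -> v:
   ArcOut i : arc from u to v of color i;  ArcIn i : arc from v to u of color i;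
   Edge j : unoriented edge of color j. *)
Inductive adjtype (m n : nat) :=
| ArcOut of 'I_m
| ArcIn of 'I_m
| Edge of 'I_n.

Definition rev_adj (m n : nat) (t : adjtype m n) : adjtype m n :=
  match t with
  | ArcOut i => ArcIn n i
  | ArcIn i => ArcOut n i
  | Edge j => Edge m j
  end.

(* An (m,n)-colored mixed graph on vertex type V is given by a function
   adj : V -> V -> option (adjtype m n); None means non-adjacent. *)
Definition is_mixed_graph (m n : nat) (V : Type) (adj : V -> V -> option (adjtype m n)) : Prop :=
  (forall u, adj u u = None) /\
  (forall u v, adj v u = option_map (@rev_adj m n) (adj u v)).

Definition colored_hom (m n : nat) (V W : Type)
  (adjG : V -> V -> option (adjtype m n)) (adjH : W -> W -> option (adjtype m n))
  (f : V -> W) : Prop :=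
  forall u v t, adjG u v = Some t -> adjH (f u) (f v) = Some t.

Definition relative_clique (m n : nat) (V : finType)
  (adj : V -> V -> option (adjtype m n)) (R : {set V}) : Prop :=
  forall u v, u \in R -> v \in R -> u != v ->
  forall (W : finType) (adjH : W -> W -> option (adjtype m n)),
    is_mixed_graph adjH ->
    forall f : V -> W, colored_hom adj adjH f -> f u != f v.

Definition max_deg_le (m n : nat) (V : finType)
  (adj : V -> V -> option (adjtype m n)) (D : nat) : Prop :=
  forall u, #|[set v | isSome (adj u v)]| <= D.

From HB Require Import structures.
From mathcomp Require Import all_boot zify.
Set Implicit Arguments. Unset Strict Implicit. Unset Printing Implicit Defensive.

(* Two non-adjacent vertices u, v of a relative clique must be seen with different
   adjacency types by some common neighbour w: otherwise identifying v with u is a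
   colored homomorphism.  Hence every ordered pair of distinct vertices of R is an
   edge or is distinguished at some centre w, and |R|^2 <= |R| + |R| D + sum_w B_w,
   where B_w counts the pairs distinguished at w.  The at most D neighbours of w in
   R are coloured by the p = 2m + n adjacency types, so by Cauchy-Schwarz at most a
   fraction (p-1)/p of their ordered pairs get different colours:
   B_w <= (p-1)/p D d_R(w), and sum_w d_R(w) <= |R| D.  Dividing by |R| gives
   |R| <= (p-1)/p D^2 + D + 1. *)

Section Adjtype.
Variables m n : nat.

Definition adjtype_code (t : adjtype m n) : ('I_m + 'I_m) + 'I_n :=
  match t with ArcOut i => inl (inl i) | ArcIn i => inl (inr i) | Edge j => inr j end.

Definition adjtype_decode (c : ('I_m + 'I_m) + 'I_n) : adjtype m n :=
  match c with
  | inl (inl i) => ArcOut n i | inl (inr i) => ArcIn n i | inr j => Edge m j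
  end.

Lemma adjtype_codeK : cancel adjtype_code adjtype_decode. Proof. by case. Qed.

Lemma adjtype_decodeK : cancel adjtype_decode adjtype_code.
Proof. by case=> [[]|]. Qed.

HB.instance Definition _ := Finite.copy (adjtype m n) (can_type adjtype_codeK).

Lemma card_adjtype : #|{: adjtype m n}| = 2 * m + n.
Proof.
rewrite (bij_eq_card (f := adjtype_code)); last first.
  by exists adjtype_decode; [exact: adjtype_codeK | exact: adjtype_decodeK].
by rewrite !card_sum !card_ord mul2n addnn.
Qed.

Lemma rev_adjK : involutive (@rev_adj m n). Proof. by case. Qed.

End Adjtype.

Definition orelse (A : Type) (o1 o2 : option A) : option A :=
  if o1 is Some t then Some t else o2.

Lemma orelse_map (A B : Type) (f : A -> B) (o1 o2 : option A) :
  orelse (option_map f o1) (option_map f o2) = option_map f (orelse o1 o2).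
Proof. by case: o1. Qed.

Section Merge.
Variables (m n : nat) (V : finType) (adj : V -> V -> option (adjtype m n)).
Hypothesis adj_mixed : is_mixed_graph adj.
Variables u v : V.
Hypotheses (neq_uv : u != v) (nadj_uv : adj u v = None).
Hypothesis agree_uv : forall w a b, adj w u = Some a -> adj w v = Some b -> a = b.

(* Identify [v] with [u]: [u] inherits the neighbours of [v]. *)
Definition merge_adj (a b : V) : option (adjtype m n) :=
  if (a == v) || (b == v) then None
  else if a == u then orelse (adj u b) (adj v b)
  else if b == u then orelse (adj a u) (adj a v)
  else adj a b.

Definition merge (x : V) : V := if x == v then u else x.

Lemma merge_adj_mixed : is_mixed_graph merge_adj.
Proof.
case: adj_mixed => adj_irr adj_sym.
have nadj_vu : adj v u = None by rewrite adj_sym nadj_uv.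
split=> [a | a b]; rewrite /merge_adj.
  case: (eqVneq a v) => //= _.
  by case: (eqVneq a u) => [->|_]; rewrite ?adj_irr ?nadj_vu.
case: (eqVneq a v) => // av; case: (eqVneq b v) => //= bv.
case: (eqVneq a u) => [au|au]; case: (eqVneq b u) => [bu|bu] //=;
  rewrite ?au ?bu.
- by rewrite adj_irr nadj_vu.
- by rewrite (adj_sym u b) (adj_sym v b) orelse_map.
- by rewrite (adj_sym a u) (adj_sym a v) orelse_map.
Qed.

Lemma merge_hom : colored_hom adj merge_adj merge.
Proof.
case: adj_mixed => adj_irr adj_sym.
have nadj_vu : adj v u = None by rewrite adj_sym nadj_uv.
move=> x y t adj_xy; rewrite /merge /merge_adj.
case: (eqVneq x v) => [xv|xv]; case: (eqVneq y v) => [yv|yv].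
- by rewrite xv yv adj_irr in adj_xy.
- rewrite xv in adj_xy *; rewrite eqxx (negbTE yv) (negbTE neq_uv) /=.
  case: (eqVneq y u) => [yu|yu]; first by rewrite yu nadj_vu in adj_xy.
  case adj_uy: (adj u y) => [s|] //=; congr Some.
  apply: (can_inj (@rev_adjK m n)); apply: (agree_uv (w := y)).
    by rewrite adj_sym adj_uy.
  by rewrite adj_sym adj_xy.
- rewrite yv in adj_xy *; rewrite (negbTE xv) eqxx (negbTE neq_uv) /=.
  case: (eqVneq x u) => [xu|xu]; first by rewrite xu nadj_uv in adj_xy.
  case adj_xu: (adj x u) => [s|] //=.
  by rewrite (agree_uv adj_xu adj_xy).
- rewrite (negbTE xv) (negbTE yv) /=.
  by case: (eqVneq x u) => [xu|xu]; case: (eqVneq y u) => [yu|yu];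
    rewrite -?xu -?yu ?adj_xy.
Qed.

End Merge.

Definition distinguishes (m n : nat) (V : finType)
  (adj : V -> V -> option (adjtype m n)) (w x y : V) : bool :=
  [&& isSome (adj w x), isSome (adj w y) & adj w x != adj w y].

Lemma relative_clique_adj_or_distinguished (m n : nat) (V : finType)
  (adj : V -> V -> option (adjtype m n)) (R : {set V}) (u v : V) :
  is_mixed_graph adj -> relative_clique adj R -> u \in R -> v \in R -> u != v ->
  isSome (adj u v) || [exists w, distinguishes adj w u v].
Proof.
move=> adj_mixed clR uR vR neq_uv.
case nadj_uv: (adj u v) => [t|] //=; apply/negP => /existsP nodist.
have agree_uv w a b : adj w u = Some a -> adj w v = Some b -> a = b.
  move=> adj_wu adj_wv; case: (eqVneq a b) => // neq_ab; case: nodist; exists w.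
  by rewrite /distinguishes adj_wu adj_wv /= (inj_eq Some_inj).
have := clR u v uR vR neq_uv _ _ (merge_adj_mixed adj_mixed nadj_uv)
  _ (merge_hom adj_mixed neq_uv nadj_uv agree_uv).
by rewrite /merge eqxx (negbTE neq_uv) eqxx.
Qed.

Lemma card_setI_sum (T : finType) (A B : {set T}) :
  #|A :&: B| = \sum_(x in A) (x \in B).
Proof.
rewrite -sum1_card [RHS](big_setID B) /= [X in _ + X]big1 ?addn0 => [|x].
  by apply: eq_bigr => x; rewrite inE => /andP[_ ->].
by rewrite inE => /andP[/negbTE ->].
Qed.

Lemma sum_setI_supported (T : finType) (A B : {set T}) (F : T -> nat) :
  (forall x, x \notin B -> F x = 0) -> \sum_(x in A) F x = \sum_(x in A :&: B) F x.
Proof.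
move=> F0; rewrite (big_setID B) /= [X in _ + X]big1 ?addn0 // => x.
by rewrite inE => /andP[/F0].
Qed.

Lemma sqr_sum_le_card_sum_sqr (T : finType) (C : {set T}) (a : T -> nat) :
  (\sum_(c in C) a c) ^ 2 <= #|C| * \sum_(c in C) a c ^ 2.
Proof.
have sqr_sum : (\sum_(c in C) a c) ^ 2 = \sum_(c in C) \sum_(d in C) a c * a d.
  by rewrite expnS expn1 big_distrl; apply: eq_bigr => c _; rewrite big_distrr.
have sum_sqr2 : \sum_(c in C) \sum_(d in C) (a c ^ 2 + a d ^ 2) =
                2 * (#|C| * \sum_(c in C) a c ^ 2).
  under eq_bigr do rewrite big_split /= sum_nat_const.
  by rewrite big_split /= sum_nat_const -big_distrr /= mul2n addnn.
rewrite -(leq_pmul2l (isT : 0 < 2)) -sum_sqr2 sqr_sum big_distrr /=.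
apply: leq_sum => c _; rewrite big_distrr /=; apply: leq_sum => d _.
exact: nat_Cauchy.
Qed.

(* If [r c] counts the points of colour [c], there are [\sum_c r c ^ 2] equal-colour
   pairs, and Cauchy-Schwarz bounds this from below by [#|S| ^ 2 / #|C|]. *)
Lemma sum_pairs_neq_le (V T : finType) (S : {set V}) (g : V -> T) (C : {set T}) :
  {in S, forall x, g x \in C} ->
  (\sum_(x in S) \sum_(y in S) (g x != g y)) * #|C| <= #|C|.-1 * #|S| ^ 2.
Proof.
move=> gSC; pose r c := \sum_(x in S | g x == c) 1.
have card_S : #|S| = \sum_(c in C) r c by rewrite -sum1_card (partition_big g (mem C)).
have all_pairs : \sum_(x in S) \sum_(y in S) (g x != g y) +
                 \sum_(x in S) \sum_(y in S) (g x == g y : nat) = #|S| ^ 2.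
  rewrite -big_split expnS expn1 -sum_nat_const.
  by apply: eq_bigr => x _; rewrite -big_split -sum1_card;
    apply: eq_bigr => y _; case: (g x == g y).
have eq_pairs : \sum_(x in S) \sum_(y in S) (g x == g y : nat) = \sum_(c in C) r c ^ 2.
  transitivity (\sum_(x in S) r (g x)).
    apply: eq_bigr => x _; rewrite /r big_mkcondr /=.
    by apply: eq_bigr => y _; rewrite eq_sym; case: (g y == g x).
  rewrite (partition_big g (mem C)) //=; apply: eq_bigr => c _.
  rewrite (eq_bigr (fun _ => r c)) => [|x /andP[_ /eqP ->] //].
  by rewrite sum_nat_const /r sum1_card expnS expn1.
have := sqr_sum_le_card_sum_sqr C r; rewrite -card_S -eq_pairs.
move: all_pairs; case: #|C| => [|k] /=; first by rewrite muln0.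
nia.
Qed.

Definition nbhd (m n : nat) (V : finType) (adj : V -> V -> option (adjtype m n))
  (w : V) : {set V} := [set x | isSome (adj w x)].

Section CliqueCounting.
Variables (m n : nat) (V : finType) (adj : V -> V -> option (adjtype m n)).
Hypothesis adj_mixed : is_mixed_graph adj.
Variable D : nat.
Hypothesis adj_deg : max_deg_le adj D.
Variable R : {set V}.

Definition distinguished_pairs (w : V) : nat :=
  \sum_(x in R) \sum_(y in R) (distinguishes adj w x y : nat).

Lemma card_setI_nbhd_le x : #|R :&: nbhd adj x| <= D.
Proof. exact: leq_trans (subset_leq_card (subsetIr _ _)) (adj_deg x). Qed.

Lemma sum_card_setI_nbhd_le : \sum_w #|R :&: nbhd adj w| <= #|R| * D.
Proof.
case: adj_mixed => _ adj_sym.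
under eq_bigr do rewrite card_setI_sum.
rewrite exchange_big /= -sum_nat_const; apply: leq_sum => x _.
apply: (@leq_trans #|nbhd adj x|); last exact: adj_deg.
rewrite -(setTI (nbhd adj x)) card_setI_sum.
apply: eq_leq; apply: eq_big => [w | w _]; first by rewrite inE.
by rewrite !inE adj_sym; case: (adj x w).
Qed.

Lemma distinguished_pairs_le w :
  distinguished_pairs w * (2 * m + n) <= (2 * m + n).-1 * D * #|R :&: nbhd adj w|.
Proof.
set S := R :&: nbhd adj w.
have in_nbhd x : (x \in nbhd adj w) = isSome (adj w x) by rewrite inE.
have -> : distinguished_pairs w = \sum_(x in S) \sum_(y in S) (adj w x != adj w y).
  rewrite /distinguished_pairs (@sum_setI_supported _ _ (nbhd adj w)) => [|x].
    apply: eq_bigr => x; rewrite inE in_nbhd => /andP[_ wx].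
    rewrite (@sum_setI_supported _ _ (nbhd adj w)) => [|y]; last first.
      by rewrite in_nbhd /distinguishes => /negbTE ->; rewrite andbF.
    by apply: eq_bigr => y; rewrite inE in_nbhd /distinguishes wx => /andP[_ ->].
  by rewrite in_nbhd => /negbTE wx; apply: big1 => y _; rewrite /distinguishes wx.
have adj_colour : {in S, forall x, adj w x \in [set Some t | t in [set: adjtype m n]]}.
  move=> x; rewrite !inE => /andP[_]; case: (adj w x) => [t|] //= _.
  by rewrite imset_f ?inE.
have card_colours : #|[set Some t | t in [set: adjtype m n]]| = 2 * m + n.
  by rewrite card_imset ?cardsT ?card_adjtype //; exact: Some_inj.
have card_S : #|S| <= D by exact: card_setI_nbhd_le.
have := sum_pairs_neq_le adj_colour; rewrite card_colours => /leq_trans; apply.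
by rewrite -mulnA leq_mul2l expnS expn1 leq_mul2r card_S !orbT.
Qed.

Hypothesis R_clique : relative_clique adj R.

Lemma card_clique_le_at x : x \in R ->
  #|R| <= 1 + D + \sum_(y in R) \sum_w (distinguishes adj w x y : nat).
Proof.
move=> xR; have pair_cover y : y \in R ->
    1 <= (x == y) + isSome (adj x y) + \sum_w (distinguishes adj w x y : nat).
  move=> yR; case: (eqVneq x y) => [//|neq_xy].
  have [->//|/existsP[w dist_w]] :=
    orP (relative_clique_adj_or_distinguished adj_mixed R_clique xR yR neq_xy).
  by rewrite (bigD1 w) //= dist_w addnA addn1.
rewrite -sum1_card; apply: leq_trans (leq_sum _ pair_cover) _.
rewrite !big_split /= leq_add2r leq_add //.
  by rewrite (bigD1 x) //= eqxx big1 // => y /andP[_ /negbTE]; rewrite eq_sym => ->.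
apply: leq_trans (card_setI_nbhd_le x); rewrite card_setI_sum.
by apply: eq_leq; apply: eq_bigr => y _; rewrite inE.
Qed.

Lemma card_clique_sqr_le :
  #|R| ^ 2 <= #|R| + #|R| * D + \sum_w distinguished_pairs w.
Proof.
have -> : \sum_w distinguished_pairs w =
          \sum_(x in R) \sum_(y in R) \sum_w (distinguishes adj w x y : nat).
  by rewrite exchange_big; apply: eq_bigr => x _; exact: exchange_big.
have -> : #|R| + #|R| * D +
    \sum_(x in R) \sum_(y in R) \sum_w (distinguishes adj w x y : nat) =
    \sum_(x in R) (1 + D + \sum_(y in R) \sum_w (distinguishes adj w x y : nat)).
  by rewrite !big_split /= !sum_nat_const muln1.
by rewrite expnS expn1 -sum_nat_const; apply: leq_sum card_clique_le_at.
Qed.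

End CliqueCounting.

Lemma clique_size_arith (p D r B : nat) : 0 < p ->
  r ^ 2 <= r + r * D + B -> B * p <= p.-1 * D * (r * D) ->
  r <= (p.-1 * D ^ 2) %/ p + D + 1.
Proof.
case: p => [//|q] _ sqr_r B_le /=.
have [->//|r_gt0] := posnP r.
have : r * (r * q.+1) <= r * (q.+1 + D * q.+1 + q * D ^ 2).
  have : r ^ 2 * q.+1 <= (r + r * D + B) * q.+1 by rewrite leq_mul2r sqr_r orbT.
  rewrite /= in B_le; nia.
rewrite leq_pmul2l // => r_le.
have : r - D - 1 <= (q * D ^ 2) %/ q.+1 by rewrite leq_divRL //; nia.
lia.
Qed.

Theorem mainTheorem1 (m n D : nat) (Hp : 2 <= 2 * m + n)
  (V : finType) (adj : V -> V -> option (adjtype m n))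
  (Hadj : is_mixed_graph adj) (Hdeg : max_deg_le adj D)
  (R : {set V}) (HR : relative_clique adj R) :
  #|R| <= ((2 * m + n).-1 * D ^ 2) %/ (2 * m + n) + D + 1.
Proof.
apply: (clique_size_arith (ltnW Hp) (card_clique_sqr_le Hadj Hdeg HR)).
rewrite big_distrl /=.
apply: leq_trans (leq_sum _ (fun w _ => distinguished_pairs_le Hdeg R w)) _.
by rewrite -big_distrr leq_mul2l sum_card_setI_nbhd_le ?orbT.
Qed.
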